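(* Let $(X,d,\ll,\le,\tau)$ be a regularly localizable Lorentzian pre-length space and let $\gamma:[a,b]\to X$ be a future-directed causal curve such that for some $a\le c<d\le b$ the restriction $\gamma|_{[c,d]}$ is rectifiable. Then there exists a future-directed timelike curve from $\gamma(a)$ to $\gamma(b)$. If $X$ is even SR-localizable, then this curve can be chosen to lie in any given neighborhood of $\gamma([a,b])$.
   Context: A causal space $(X,\ll,\le)$: $\le$ reflexive and transitive, $\ll$ transitive, $x\ll y\Rightarrow x\le y$; $x<y$ means $x\le y,x\ne y$; $I^\pm$ chronological future/past. A Lorentzian pre-length space $(X,d,\ll,\le,\tau)$ is a causal space with a metric $d$ and $\tau:X\times X\to[0,\infty]$ lower semicontinuous w.r.t. $d$, with $\tau(x,z)\ge\tau(x,y)+\tau(y,z)$ for $x\le y\le z$, $\tau(x,y)=0$ if $x\not\le y$, $\tau(x,y)>0\iff x\ll y$. Future-directed causal (timelike) curve: non-constant, $d$-locally Lipschitz $\gamma:I\to X$ with $\gamma(t_1)\le\gamma(t_2)$ (resp. $\ll$) for $t_1<t_2$; null if no two of its points are $\ll$-related; contains a null segment if null on a non-trivial subinterval. $L_\tau(\gamma)=\inf\sum_i\tau(\gamma(t_i),\gamma(t_{i+1}))$ over partitions of its domain; $\gamma$ is rectifiable if $L_\tau(\gamma|_{[t_1,t_2]})>0$ for all $t_1<t_2$ in its domain. $L^d$ is $d$-arclength. For an open set $\Omega$ consider: (a) some $C>0$ bounds $L^d$ of every causal curve in $\Omega$; (b) there is a continuous $\omega:\Omega\times\Omega\to[0,\infty)$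 making $\Omega$ with restricted $d,\ll,\le$ a Lorentzian pre-length space, with $I^\pm(y)\cap\Omega\ne\emptyset$ for all $y\in\Omega$; (c) for $p<q$ in $\Omega$ there is a future-directed causal curve $\gamma_{p,q}$ from $p$ to $q$ in $\Omega$ with $L_\tau(\gamma_{p,q})\ge L_\tau(\lambda)$ for all future-directed causal $\lambda$ from $p$ to $q$ in $\Omega$ and $L_\tau(\gamma_{p,q})=\omega(p,q)\le\tau(p,q)$; (d) whenever $p\ll q$ in $\Omega$, $\gamma_{p,q}$ is timelike and strictly longer than any future-directed causal curve in $\Omega$ from $p$ to $q$ containing a null segment. $X$ is regularly localizable if every point has an open neighborhood with (a)–(d), and SR-localizable if every point has a neighborhood basis of open sets with (a)–(d). *)

From Stdlib Require Import Reals.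
From Coquelicot Require Import Coquelicot.
Open Scope R_scope.

Section LPLS.
Variable X : Type.

Definition is_metric (d : X -> X -> R) : Prop :=
  (forall x y, 0 <= d x y) /\ (forall x y, d x y = 0 <-> x = y) /\
  (forall x y, d x y = d y x) /\ (forall x y z, d x z <= d x y + d y z).

Definition d_open (d : X -> X -> R) (U : X -> Prop) : Prop :=
  forall x, U x -> exists eps, 0 < eps /\ forall y, d x y < eps -> U y.

Definition d_nbhd_of_set (d : X -> X -> R) (A U : X -> Prop) : Prop :=
  exists V, d_open d V /\ (forall x, A x -> V x) /\ (forall x, V x -> U x).

Definition d_nbhd (d : X -> X -> R) (x : X) (U : X -> Prop) : Prop :=
  d_nbhd_of_set d (fun y => y = x) U.

Record causal_space (ll le : X -> X -> Prop) : Prop := {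
  cs_le_refl : forall x, le x x;
  cs_le_trans : forall x y z, le x y -> le y z -> le x z;
  cs_ll_trans : forall x y z, ll x y -> ll y z -> ll x z;
  cs_ll_le : forall x y, ll x y -> le x y }.

Record LPLS (d : X -> X -> R) (ll le : X -> X -> Prop) (tau : X -> X -> Rbar)
  : Prop := {
  lp_metric : is_metric d;
  lp_causal : causal_space ll le;
  lp_tau_nonneg : forall x y, Rbar_le (Finite 0) (tau x y);
  lp_tau_lsc : forall x y (r : R), Rbar_lt (Finite r) (tau x y) ->
      exists eps, 0 < eps /\ forall x' y', d x x' < eps -> d y y' < eps ->
        Rbar_lt (Finite r) (tau x' y');
  lp_rev_tri : forall x y z, le x y -> le y z ->
      Rbar_le (Rbar_plus (tau x y) (tau y z)) (tau x z);
  lp_tau_zero : forall x y, ~ le x y -> tau x y = Finite 0;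
  lp_tau_pos : forall x y, Rbar_lt (Finite 0) (tau x y) <-> ll x y }.

Definition in_cint (a b t : R) : Prop := a <= t <= b.

Definition loc_lipschitz (d : X -> X -> R) (a b : R) (g : R -> X) : Prop :=
  forall t, in_cint a b t -> exists delta L, 0 < delta /\
    forall s s', in_cint a b s -> in_cint a b s' ->
      Rabs (s - t) < delta -> Rabs (s' - t) < delta ->
      d (g s) (g s') <= L * Rabs (s - s').

Definition non_constant (a b : R) (g : R -> X) : Prop :=
  exists s s', in_cint a b s /\ in_cint a b s' /\ g s <> g s'.

Definition fd_causal (d : X -> X -> R) (le : X -> X -> Prop)
    (a b : R) (g : R -> X) : Prop :=
  a < b /\ non_constant a b g /\ loc_lipschitz d a b g /\
  forall t1 t2, in_cint a b t1 -> in_cint a b t2 -> t1 < t2 -> le (g t1) (g t2).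

Definition fd_timelike (d : X -> X -> R) (ll : X -> X -> Prop)
    (a b : R) (g : R -> X) : Prop :=
  a < b /\ non_constant a b g /\ loc_lipschitz d a b g /\
  forall t1 t2, in_cint a b t1 -> in_cint a b t2 -> t1 < t2 -> ll (g t1) (g t2).

Definition null_on (ll : X -> X -> Prop) (a b : R) (g : R -> X) : Prop :=
  forall s s', in_cint a b s -> in_cint a b s' -> ~ ll (g s) (g s').

Definition has_null_segment (ll : X -> X -> Prop) (a b : R) (g : R -> X)
  : Prop :=
  exists c e, a <= c /\ c < e /\ e <= b /\ null_on ll c e g.

Definition curve_in (U : X -> Prop) (a b : R) (g : R -> X) : Prop :=
  forall t, in_cint a b t -> U (g t).

Definition is_partition (a b : R) (n : nat) (t : nat -> R) : Prop :=
  t O = a /\ t n = b /\ forall i, (i < n)%nat -> t i < t (S i).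

Fixpoint Rbar_sum (f : nat -> Rbar) (n : nat) : Rbar :=
  match n with O => Finite 0 | S k => Rbar_plus (Rbar_sum f k) (f k) end.

Definition L_tau (tau : X -> X -> Rbar) (a b : R) (g : R -> X) : Rbar :=
  Rbar_glb (fun r => exists n t, is_partition a b n t /\
     r = Rbar_sum (fun i => tau (g (t i)) (g (t (S i)))) n).

Definition L_d (d : X -> X -> R) (a b : R) (g : R -> X) : Rbar :=
  Rbar_lub (fun r => exists n t, is_partition a b n t /\
     r = Rbar_sum (fun i => Finite (d (g (t i)) (g (t (S i))))) n).

Definition rectifiable_on (tau : X -> X -> Rbar) (c e : R) (g : R -> X)
  : Prop :=
  forall t1 t2, c <= t1 -> t1 < t2 -> t2 <= e ->
    Rbar_lt (Finite 0) (L_tau tau t1 t2 g).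

Definition good_nbhd (d : X -> X -> R) (ll le : X -> X -> Prop)
    (tau : X -> X -> Rbar) (O : X -> Prop) : Prop :=
  d_open d O /\
  (exists C, 0 < C /\ forall a b g, fd_causal d le a b g -> curve_in O a b g ->
      Rbar_le (L_d d a b g) (Finite C)) /\
  exists omega : X -> X -> R,
    (forall x y, O x -> O y -> forall eps, 0 < eps -> exists delta, 0 < delta /\
       forall x' y', O x' -> O y' -> d x x' < delta -> d y y' < delta ->
         Rabs (omega x' y' - omega x y) < eps) /\
    (forall x y, O x -> O y -> 0 <= omega x y) /\
    (forall x y z, O x -> O y -> O z -> le x y -> le y z ->
       omega x y + omega y z <= omega x z) /\
    (forall x y, O x -> O y -> ~ le x y -> omega x y = 0) /\
    (forall x y, O x -> O y -> (0 < omega x y <-> ll x y)) /\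
    (forall y, O y -> (exists z, O z /\ ll y z) /\ (exists z, O z /\ ll z y)) /\
    forall p q, O p -> O q -> le p q -> p <> q ->
      exists a b g, fd_causal d le a b g /\ curve_in O a b g /\
        g a = p /\ g b = q /\
        (forall a' b' l, fd_causal d le a' b' l -> curve_in O a' b' l ->
           l a' = p -> l b' = q -> Rbar_le (L_tau tau a' b' l) (L_tau tau a b g)) /\
        L_tau tau a b g = Finite (omega p q) /\
        Rbar_le (Finite (omega p q)) (tau p q) /\
        (ll p q ->
           fd_timelike d ll a b g /\
           forall a' b' l, fd_causal d le a' b' l -> curve_in O a' b' l ->
             l a' = p -> l b' = q -> has_null_segment ll a' b' l ->
             Rbar_lt (L_tau tau a' b' l) (L_tau tau a b g)).

Definition regularly_localizable d ll le tau : Prop :=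
  forall x, exists O, O x /\ good_nbhd d ll le tau O.

Definition SR_localizable d ll le tau : Prop :=
  forall x U, d_nbhd d x U ->
    exists O, O x /\ (forall y, O y -> U y) /\ good_nbhd d ll le tau O.

End LPLS.

From Stdlib Require Import Reals Lra Classical_Prop.
From Coquelicot Require Import Coquelicot.
Open Scope R_scope.

(* Call p and q U-connected when a future-directed timelike curve inside U runs
   from p to q; gluing curves makes this relation transitive.  A localizing
   neighbourhood O inside U connects any two <<-related points of O, and a
   connection ending at a point q of an open O can be cut short so that it ends
   at some w in O with w << q.  On the rectifiable piece [c,e] of the curve g any
   two points are <<-related, since L_tau of a segment is at most tau of its
   endpoints.  Fix m inside (c,e).  A supremum argument shows that g m is
   U-connected to g b: if g m is connected to g y with g y in a localizing
   neighbourhood O of g t, cut that connection short to w in O; then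
   w << g y <= g z, so O connects w to g z for all z near t.  The same argument
   run backwards connects g a to g m.  The first claim is the case U = X;
   SR-localizability provides localizing neighbourhoods inside any given U. *)

Lemma real_induction (P : R -> Prop) (m b : R) :
  m < b ->
  (forall t, m <= t <= b -> (forall y, m < y < t -> P y) ->
     exists delta, 0 < delta /\ forall z, m < z <= b -> z < t + delta -> P z) ->
  P b.
Proof.
  intros Hmb Hstep.
  set (S := fun x => m <= x <= b /\ forall y, m < y <= x -> P y).
  destruct (completeness S) as [s [Hub Hlub]].
  { exists b. intros x [Hx _]. lra. }
  { exists m. split; [lra | intros; lra]. }
  assert (Hms : m <= s) by (apply Hub; split; [lra | intros; lra]).
  assert (Hsb : s <= b) by (apply Hlub; intros x [Hx _]; lra).
  assert (Hbelow : forall y, m < y < s -> P y).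
  { intros y Hy. apply NNPP. intro HnPy.
    assert (s <= y); [|lra].
    apply Hlub. intros x [_ Hx].
    destruct (Rle_lt_dec x y) as [Hxy | Hyx]; [exact Hxy|].
    exfalso. apply HnPy, Hx. lra. }
  destruct (Hstep s (conj Hms Hsb) Hbelow) as [delta [Hdelta HP]].
  destruct (Rlt_le_dec b (s + delta)) as [Hb | Hb].
  - apply HP; lra.
  - assert (HS : S (s + delta / 2)) by (split; [lra | intros y Hy; apply HP; lra]).
    specialize (Hub _ HS). lra.
Qed.

(* Stated for an abstract relation so that it also applies to time-reversed
   data, with [Rel], [ll], [le] flipped and [g] reparametrized by [t |-> -t]. *)
Section Propagation.
Variables (X : Type) (Rel ll le : X -> X -> Prop) (g : R -> X) (m b e : R).
Hypothesis Rel_trans : forall p q r, Rel p q -> Rel q r -> Rel p r.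
Hypothesis ll_le_trans : forall p q r, ll p q -> le q r -> ll p r.
Hypothesis g_mono : forall t1 t2, m <= t1 -> t1 < t2 -> t2 <= b -> le (g t1) (g t2).
Hypothesis g_local : forall t, m <= t <= b -> exists delta (O : X -> Prop), 0 < delta /\
  (forall s, m <= s <= b -> Rabs (s - t) < delta -> O (g s)) /\
  (forall p q, O p -> O q -> ll p q -> Rel p q) /\
  (forall p q, Rel p q -> O q -> exists w, O w /\ Rel p w /\ ll w q).
Hypothesis m_lt_e : m < e.
Hypothesis g_start : forall x, m < x <= e -> ll (g m) (g x).

Lemma propagation_step t :
  m <= t <= b -> (forall y, m < y < t -> Rel (g m) (g y)) ->
  exists delta, 0 < delta /\ forall z, m < z <= b -> z < t + delta -> Rel (g m) (g z).
Proof.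
  intros Ht Hbelow.
  destruct (g_local t Ht) as [delta [O [Hdelta [HO [Hll Hext]]]]].
  destruct (Rle_lt_or_eq_dec _ _ (proj1 Ht)) as [Hmt | <-].
  - set (y := (Rmax m (t - delta) + t) / 2).
    assert (Hy : m < y < t /\ t - delta < y).
    { pose proof (Rmax_l m (t - delta)). pose proof (Rmax_r m (t - delta)).
      assert (Rmax m (t - delta) < t) by (apply Rmax_lub_lt; lra).
      unfold y. lra. }
    assert (Oy : O (g y)) by (apply HO; [lra | apply Rabs_def1; lra]).
    (* Cut the connection to [g y] short inside [O]; then [w << g y <= g z]. *)
    destruct (Hext _ _ (Hbelow y (proj1 Hy)) Oy) as [w [Ow [Hmw Hwy]]].
    exists delta. split; [exact Hdelta|]. intros z Hz Hzt.
    destruct (Rlt_le_dec z t) as [Hzt' | Htz]; [apply Hbelow; lra|].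
    apply (Rel_trans _ w); [exact Hmw|].
    apply Hll; [exact Ow | apply HO; [lra | apply Rabs_def1; lra] |].
    apply (ll_le_trans _ (g y)); [exact Hwy | apply g_mono; lra].
  - exists (Rmin delta (e - m)). split; [apply Rmin_glb_lt; lra|].
    intros z Hz Hzm. pose proof (Rmin_l delta (e - m)). pose proof (Rmin_r delta (e - m)).
    apply Hll; [apply HO; [lra | rewrite Rminus_diag, Rabs_R0; lra] | |].
    + apply HO; [lra | apply Rabs_def1; lra].
    + apply g_start. lra.
Qed.

Lemma relation_propagates : m < b -> Rel (g m) (g b).
Proof.
  intro Hmb. exact (real_induction (fun y => Rel (g m) (g y)) m b Hmb propagation_step).
Qed.

End Propagation.

Section TimelikeCurves.
Variables (X : Type) (d : X -> X -> R) (ll : X -> X -> Prop).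
Hypothesis d_metric : is_metric X d.
Hypothesis ll_irrefl : forall x, ~ ll x x.
Hypothesis ll_trans : forall x y z, ll x y -> ll y z -> ll x z.

Lemma d_sym x y : d x y = d y x.
Proof. apply d_metric. Qed.

Lemma d_triangle x y z : d x z <= d x y + d y z.
Proof. apply d_metric. Qed.

Lemma loc_lipschitz_continuous a b s t eps :
  loc_lipschitz X d a b s -> in_cint a b t -> 0 < eps ->
  exists delta, 0 < delta /\
    forall u, in_cint a b u -> Rabs (u - t) < delta -> d (s t) (s u) < eps.
Proof.
  intros Hl Ht Heps. destruct (Hl t Ht) as [delta [L [Hdelta HL]]].
  set (k := Rabs L + 1).
  assert (Hk : 0 < k) by (pose proof (Rabs_pos L); unfold k; lra).
  exists (Rmin delta (eps / k)). split.
  { apply Rmin_glb_lt; [exact Hdelta | apply Rdiv_lt_0_compat; assumption]. }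
  intros u Hu Hut.
  pose proof (Rmin_l delta (eps / k)). pose proof (Rmin_r delta (eps / k)).
  eapply Rle_lt_trans; [apply HL; auto; rewrite ?Rminus_diag, ?Rabs_R0; lra|].
  rewrite Rabs_minus_sym.
  assert (Hx : Rabs (u - t) * k < eps).
  { replace eps with (eps / k * k) by (field; lra). apply Rmult_lt_compat_r; lra. }
  pose proof (Rle_abs L). pose proof (Rabs_pos (u - t)). unfold k in Hx. nra.
Qed.

Lemma loc_lipschitz_sub a b a' b' s :
  a <= a' -> b' <= b -> loc_lipschitz X d a b s -> loc_lipschitz X d a' b' s.
Proof.
  intros Ha Hb Hl t Ht. destruct (Hl t) as [delta [L [Hdelta HL]]]; [unfold in_cint in *; lra|].
  exists delta, L. split; [exact Hdelta|].
  intros u u' Hu Hu'. apply HL; unfold in_cint in *; lra.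
Qed.

Lemma loc_lipschitz_shift a b h s :
  loc_lipschitz X d a b s -> loc_lipschitz X d (a - h) (b - h) (fun t => s (t + h)).
Proof.
  intros Hl t Ht. destruct (Hl (t + h)) as [delta [L [Hdelta HL]]]; [unfold in_cint in *; lra|].
  exists delta, L. split; [exact Hdelta|].
  intros u u' Hu Hu' Hut Hu't. replace (u - u') with (u + h - (u' + h)) by ring.
  apply HL; unfold in_cint in *; try lra.
  - replace (u + h - (t + h)) with (u - t) by ring. exact Hut.
  - replace (u' + h - (t + h)) with (u' - t) by ring. exact Hu't.
Qed.

Lemma lipschitz_across a b (f : R -> X) t delta L :
  (forall u u', in_cint a b u -> in_cint a b u' -> u <= t -> u' <= t ->
     Rabs (u - t) < delta -> Rabs (u' - t) < delta -> d (f u) (f u') <= L * Rabs (u - u')) ->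
  (forall u u', in_cint a b u -> in_cint a b u' -> t <= u -> t <= u' ->
     Rabs (u - t) < delta -> Rabs (u' - t) < delta -> d (f u) (f u') <= L * Rabs (u - u')) ->
  in_cint a b t ->
  forall u u', in_cint a b u -> in_cint a b u' ->
    Rabs (u - t) < delta -> Rabs (u' - t) < delta -> d (f u) (f u') <= L * Rabs (u - u').
Proof.
  intros Hleft Hright Ht.
  assert (Hcross : forall u u', in_cint a b u -> in_cint a b u' -> u <= t <= u' ->
            Rabs (u - t) < delta -> Rabs (u' - t) < delta -> d (f u) (f u') <= L * Rabs (u - u')).
  { intros u u' Hu Hu' Hut Hdu Hdu'.
    assert (Hdt : Rabs (t - t) < delta) by (rewrite Rminus_diag, Rabs_R0; pose proof (Rabs_pos (u - t)); lra).
    pose proof (Hleft u t Hu Ht (proj1 Hut) (Rle_refl t) Hdu Hdt).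
    pose proof (Hright t u' Ht Hu' (Rle_refl t) (proj2 Hut) Hdt Hdu').
    pose proof (d_triangle (f u) (f t) (f u')).
    rewrite Rabs_left1 in * by lra. lra. }
  intros u u' Hu Hu' Hdu Hdu'.
  destruct (Rle_dec u t), (Rle_dec u' t).
  - apply Hleft; assumption.
  - apply Hcross; auto; lra.
  - rewrite d_sym, Rabs_minus_sym. apply Hcross; auto; lra.
  - apply Hright; auto; lra.
Qed.

Definition glue (c : R) (s1 s2 : R -> X) (t : R) : X :=
  if Rle_dec t c then s1 t else s2 t.

Lemma glue_left c s1 s2 t : t <= c -> glue c s1 s2 t = s1 t.
Proof. intro Htc. unfold glue. destruct (Rle_dec t c); [reflexivity | lra]. Qed.

Lemma glue_right c s1 s2 t : s1 c = s2 c -> c <= t -> glue c s1 s2 t = s2 t.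
Proof.
  intros Hc Hct. unfold glue. destruct (Rle_dec t c); [|reflexivity].
  replace t with c by lra. exact Hc.
Qed.

Lemma loc_lipschitz_glue a c b s1 s2 :
  s1 c = s2 c -> loc_lipschitz X d a c s1 -> loc_lipschitz X d c b s2 ->
  loc_lipschitz X d a b (glue c s1 s2).
Proof.
  intros Hc Hl1 Hl2 t Ht. unfold in_cint in Ht.
  destruct (Rtotal_order t c) as [Htc | [-> | Hct]].
  - destruct (Hl1 t) as [delta [L [Hdelta HL]]]; [unfold in_cint; lra|].
    exists (Rmin delta (c - t)), L. split; [apply Rmin_glb_lt; lra|].
    intros u u' Hu Hu' Hut Hu't. unfold in_cint in Hu, Hu'.
    pose proof (Rmin_l delta (c - t)). pose proof (Rmin_r delta (c - t)).
    apply Rabs_def2 in Hut. apply Rabs_def2 in Hu't.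
    rewrite !glue_left by lra. apply HL; try (unfold in_cint; lra); apply Rabs_def1; lra.
  - destruct (Hl1 c) as [delta1 [L1 [Hdelta1 HL1]]]; [unfold in_cint; lra|].
    destruct (Hl2 c) as [delta2 [L2 [Hdelta2 HL2]]]; [unfold in_cint; lra|].
    exists (Rmin delta1 delta2), (Rmax L1 L2). split; [apply Rmin_glb_lt; lra|].
    pose proof (Rmin_l delta1 delta2). pose proof (Rmin_r delta1 delta2).
    apply lipschitz_across; [| | unfold in_cint; lra].
    + intros u u' Hu Hu' Huc Hu'c Hut Hu't. unfold in_cint in Hu, Hu'.
      rewrite !glue_left by lra.
      eapply Rle_trans; [apply HL1; try (unfold in_cint; lra); lra|].
      apply Rmult_le_compat_r; [apply Rabs_pos | apply Rmax_l].
    + intros u u' Hu Hu' Huc Hu'c Hut Hu't. unfold in_cint in Hu, Hu'.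
      rewrite !(glue_right _ _ _ _ Hc) by lra.
      eapply Rle_trans; [apply HL2; try (unfold in_cint; lra); lra|].
      apply Rmult_le_compat_r; [apply Rabs_pos | apply Rmax_r].
  - destruct (Hl2 t) as [delta [L [Hdelta HL]]]; [unfold in_cint; lra|].
    exists (Rmin delta (t - c)), L. split; [apply Rmin_glb_lt; lra|].
    intros u u' Hu Hu' Hut Hu't. unfold in_cint in Hu, Hu'.
    pose proof (Rmin_l delta (t - c)). pose proof (Rmin_r delta (t - c)).
    apply Rabs_def2 in Hut. apply Rabs_def2 in Hu't.
    rewrite !(glue_right _ _ _ _ Hc) by lra. apply HL; try (unfold in_cint; lra); apply Rabs_def1; lra.
Qed.

Lemma fd_timelike_intro a b s :
  a < b -> loc_lipschitz X d a b s ->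
  (forall t1 t2, in_cint a b t1 -> in_cint a b t2 -> t1 < t2 -> ll (s t1) (s t2)) ->
  fd_timelike X d ll a b s.
Proof.
  intros Hab Hl Hll. split; [exact Hab|]. split; [|split; [exact Hl | exact Hll]].
  exists a, b. split; [unfold in_cint; lra|]. split; [unfold in_cint; lra|].
  intro Hab'. apply (ll_irrefl (s a)). rewrite Hab' at 2. apply Hll; unfold in_cint; lra.
Qed.

Lemma fd_timelike_sub a b a' b' s :
  a <= a' -> a' < b' -> b' <= b -> fd_timelike X d ll a b s -> fd_timelike X d ll a' b' s.
Proof.
  intros Ha Hab' Hb [_ [_ [Hl Hll]]].
  apply fd_timelike_intro; [exact Hab' | exact (loc_lipschitz_sub a b a' b' s Ha Hb Hl)|].
  intros t1 t2 H1 H2 H12. apply Hll; unfold in_cint in *; lra.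
Qed.

Lemma fd_timelike_shift a b h s :
  fd_timelike X d ll a b s -> fd_timelike X d ll (a - h) (b - h) (fun t => s (t + h)).
Proof.
  intros [Hab [_ [Hl Hll]]].
  apply fd_timelike_intro; [lra | exact (loc_lipschitz_shift a b h s Hl)|].
  intros t1 t2 H1 H2 H12. apply Hll; unfold in_cint in *; lra.
Qed.

Lemma fd_timelike_glue a c b s1 s2 :
  s1 c = s2 c -> fd_timelike X d ll a c s1 -> fd_timelike X d ll c b s2 ->
  fd_timelike X d ll a b (glue c s1 s2).
Proof.
  intros Hc [Hac [_ [Hl1 Hll1]]] [Hcb [_ [Hl2 Hll2]]].
  apply fd_timelike_intro; [lra | exact (loc_lipschitz_glue a c b s1 s2 Hc Hl1 Hl2)|].
  intros t1 t2 H1 H2 H12. unfold in_cint in H1, H2.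
  destruct (Rle_dec t2 c); [rewrite !glue_left by lra; apply Hll1; unfold in_cint; lra|].
  rewrite (glue_right _ _ _ t2 Hc) by lra.
  destruct (Rle_dec c t1); [rewrite (glue_right _ _ _ t1 Hc) by lra; apply Hll2; unfold in_cint; lra|].
  rewrite glue_left by lra.
  apply (ll_trans _ (s1 c)); [apply Hll1; unfold in_cint; lra | rewrite Hc; apply Hll2; unfold in_cint; lra].
Qed.

Definition timelike_connected (U : X -> Prop) (p q : X) : Prop :=
  exists a b s, fd_timelike X d ll a b s /\ s a = p /\ s b = q /\ curve_in X U a b s.

Lemma timelike_connected_trans U p q r :
  timelike_connected U p q -> timelike_connected U q r -> timelike_connected U p r.
Proof.
  intros [a1 [b1 [s1 [T1 [E1 [F1 C1]]]]]] [a2 [b2 [s2 [T2 [E2 [F2 C2]]]]]].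
  pose proof (fd_timelike_shift a2 b2 (a2 - b1) s2 T2) as T2'.
  replace (a2 - (a2 - b1)) with b1 in T2' by ring.
  set (s2' := fun t => s2 (t + (a2 - b1))) in T2'.
  assert (Hjoin : s1 b1 = s2' b1) by (unfold s2'; replace (b1 + (a2 - b1)) with a2 by ring; congruence).
  pose proof (proj1 T1) as Hab1.
  exists a1, (b2 - (a2 - b1)), (glue b1 s1 s2'). split; [|split; [|split]].
  - exact (fd_timelike_glue _ _ _ _ _ Hjoin T1 T2').
  - rewrite glue_left by lra. exact E1.
  - rewrite (glue_right _ _ _ _ Hjoin) by (pose proof (proj1 T2'); lra).
    unfold s2'. replace (b2 - (a2 - b1) + (a2 - b1)) with b2 by ring. exact F2.
  - intros t Ht. unfold in_cint in Ht. destruct (Rle_dec t b1).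
    + rewrite glue_left by lra. apply C1. unfold in_cint; lra.
    + rewrite (glue_right _ _ _ _ Hjoin) by lra. apply C2. unfold in_cint; lra.
Qed.

Lemma timelike_connected_extend_future U O p q :
  d_open X d O -> O q -> timelike_connected U p q ->
  exists w, O w /\ timelike_connected U p w /\ ll w q.
Proof.
  intros HO Oq [a [b [s [T [Ea [Eb C]]]]]].
  destruct (HO q Oq) as [eps [Heps Hball]].
  pose proof T as [Hab [_ [Hl Hll]]].
  destruct (loc_lipschitz_continuous a b s b eps Hl) as [delta [Hdelta Hcont]];
    [unfold in_cint; lra | exact Heps|].
  set (u := Rmax ((a + b) / 2) (b - delta / 2)).
  assert (Hu : a < u < b /\ b - delta < u).
  { unfold u. pose proof (Rmax_l ((a + b) / 2) (b - delta / 2)).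
    pose proof (Rmax_r ((a + b) / 2) (b - delta / 2)).
    assert (Rmax ((a + b) / 2) (b - delta / 2) < b) by (apply Rmax_lub_lt; lra). lra. }
  exists (s u). split; [|split].
  - apply Hball. rewrite <- Eb. apply Hcont; [unfold in_cint; lra | apply Rabs_def1; lra].
  - exists a, u, s. split; [apply (fd_timelike_sub a b); auto; lra|].
    split; [exact Ea|]. split; [reflexivity|].
    intros t Ht. apply C. unfold in_cint in *. lra.
  - rewrite <- Eb. apply Hll; unfold in_cint; lra.
Qed.

Lemma timelike_connected_extend_past U O p q :
  d_open X d O -> O p -> timelike_connected U p q ->
  exists w, O w /\ timelike_connected U w q /\ ll p w.
Proof.
  intros HO Op [a [b [s [T [Ea [Eb C]]]]]].
  destruct (HO p Op) as [eps [Heps Hball]].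
  pose proof T as [Hab [_ [Hl Hll]]].
  destruct (loc_lipschitz_continuous a b s a eps Hl) as [delta [Hdelta Hcont]];
    [unfold in_cint; lra | exact Heps|].
  set (u := Rmin ((a + b) / 2) (a + delta / 2)).
  assert (Hu : a < u < b /\ u < a + delta).
  { unfold u. pose proof (Rmin_l ((a + b) / 2) (a + delta / 2)).
    pose proof (Rmin_r ((a + b) / 2) (a + delta / 2)).
    assert (a < Rmin ((a + b) / 2) (a + delta / 2)) by (apply Rmin_glb_lt; lra). lra. }
  exists (s u). split; [|split].
  - apply Hball. rewrite <- Ea. apply Hcont; [unfold in_cint; lra | apply Rabs_def1; lra].
  - exists u, b, s. split; [apply (fd_timelike_sub a b); auto; lra|].
    split; [reflexivity|]. split; [exact Eb|].
    intros t Ht. apply C. unfold in_cint in *. lra.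
  - rewrite <- Ea. apply Hll; unfold in_cint; lra.
Qed.

End TimelikeCurves.

Lemma Rbar_plus_pos_nonneg (x y : Rbar) :
  Rbar_lt (Finite 0) x -> Rbar_le (Finite 0) y -> Rbar_lt (Finite 0) (Rbar_plus x y).
Proof. destruct x, y; simpl; intros; lra || auto. Qed.

Section LorentzianPreLength.
Variables (X : Type) (d : X -> X -> R) (ll le : X -> X -> Prop) (tau : X -> X -> Rbar).
Hypothesis HL : LPLS X d ll le tau.

Lemma ll_le_trans p q r : ll p q -> le q r -> ll p r.
Proof.
  intros Hpq Hqr. apply (lp_tau_pos _ _ _ _ _ HL).
  assert (Hle : le p q) by exact (cs_ll_le _ _ _ (lp_causal _ _ _ _ _ HL) _ _ Hpq).
  eapply Rbar_lt_le_trans; [|exact (lp_rev_tri _ _ _ _ _ HL p q r Hle Hqr)].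
  apply Rbar_plus_pos_nonneg; [apply (lp_tau_pos _ _ _ _ _ HL); exact Hpq | apply HL].
Qed.

Lemma le_ll_trans p q r : le p q -> ll q r -> ll p r.
Proof.
  intros Hpq Hqr. apply (lp_tau_pos _ _ _ _ _ HL).
  assert (Hle : le q r) by exact (cs_ll_le _ _ _ (lp_causal _ _ _ _ _ HL) _ _ Hqr).
  eapply Rbar_lt_le_trans; [|exact (lp_rev_tri _ _ _ _ _ HL p q r Hpq Hle)].
  rewrite Rbar_plus_comm.
  apply Rbar_plus_pos_nonneg; [apply (lp_tau_pos _ _ _ _ _ HL); exact Hqr | apply HL].
Qed.

Lemma L_tau_le_tau (g : R -> X) t1 t2 :
  t1 < t2 -> Rbar_le (L_tau X tau t1 t2 g) (tau (g t1) (g t2)).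
Proof.
  intro Ht. apply (proj1 (proj2_sig (Rbar_ex_glb _))).
  exists 1%nat, (fun i => match i with O => t1 | _ => t2 end). split.
  - split; [reflexivity|]. split; [reflexivity|].
    intros [|i] Hi; [exact Ht | inversion Hi as [|? Hi']; inversion Hi'].
  - simpl. rewrite Rbar_plus_0_l. reflexivity.
Qed.

Lemma rectifiable_ll c e g t1 t2 :
  rectifiable_on X tau c e g -> c <= t1 -> t1 < t2 -> t2 <= e -> ll (g t1) (g t2).
Proof.
  intros Hrect H1 H12 H2. apply (lp_tau_pos _ _ _ _ _ HL).
  eapply Rbar_lt_le_trans; [exact (Hrect t1 t2 H1 H12 H2) | exact (L_tau_le_tau g t1 t2 H12)].
Qed.

(* Reverse triangle inequality for [omega] at [(x, x, x)] gives [omega x x <= 0]. *)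
Lemma regularly_localizable_chronological :
  regularly_localizable X d ll le tau -> forall x, ~ ll x x.
Proof.
  intros HR x Hx. destruct (HR x) as [O [Ox [_ [_ [omega [_ [_ [Htri [_ [Hpos _]]]]]]]]]].
  pose proof (cs_le_refl _ _ _ (lp_causal _ _ _ _ _ HL) x) as Hxx.
  pose proof (Htri x x x Ox Ox Ox Hxx Hxx). pose proof (proj2 (Hpos x x Ox Ox) Hx). lra.
Qed.

Hypothesis ll_irrefl : forall x, ~ ll x x.
Variable U : X -> Prop.

Lemma good_nbhd_timelike_connected O p q :
  good_nbhd X d ll le tau O -> (forall y, O y -> U y) -> O p -> O q -> ll p q ->
  timelike_connected X d ll U p q.
Proof.
  intros [_ [_ [omega [_ [_ [_ [_ [_ [_ Hgeod]]]]]]]]] HOU Op Oq Hpq.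
  assert (Hne : p <> q) by (intros <-; exact (ll_irrefl p Hpq)).
  assert (Hle : le p q) by exact (cs_ll_le _ _ _ (lp_causal _ _ _ _ _ HL) _ _ Hpq).
  destruct (Hgeod p q Op Oq Hle Hne) as [a [b [s [_ [Cs [Ea [Eb [_ [_ [_ Htl]]]]]]]]]].
  exists a, b, s. split; [exact (proj1 (Htl Hpq))|].
  split; [exact Ea|]. split; [exact Eb|].
  intros t Ht. apply HOU, Cs, Ht.
Qed.

Let connected_trans :=
  timelike_connected_trans X d ll (lp_metric _ _ _ _ _ HL) ll_irrefl
    (cs_ll_trans _ _ _ (lp_causal _ _ _ _ _ HL)) U.

Section AlongCurve.
Variables (a b : R) (g : R -> X).
Hypothesis g_nbhds : forall t, in_cint a b t ->
  exists O, O (g t) /\ (forall y, O y -> U y) /\ good_nbhd X d ll le tau O.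
Hypothesis g_causal : fd_causal X d le a b g.

Lemma curve_covered_locally t : in_cint a b t ->
  exists delta O, 0 < delta /\
    (forall s, in_cint a b s -> Rabs (s - t) < delta -> O (g s)) /\ d_open X d O /\
    (forall p q, O p -> O q -> ll p q -> timelike_connected X d ll U p q).
Proof.
  intro Ht. destruct g_causal as [_ [_ [Hl _]]].
  destruct (g_nbhds t Ht) as [O [Ot [HOU HO]]].
  destruct (proj1 HO _ Ot) as [eps [Heps Hball]].
  destruct (loc_lipschitz_continuous X d a b g t eps Hl Ht Heps) as [delta [Hdelta Hcont]].
  exists delta, O. split; [exact Hdelta|]. split; [|split; [exact (proj1 HO)|]].
  - intros s Hs Hst. apply Hball, Hcont; assumption.
  - intros p q Op Oq Hpq. exact (good_nbhd_timelike_connected O p q HO HOU Op Oq Hpq).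
Qed.

Lemma timelike_connected_to_end m e :
  a <= m -> m < e -> e <= b -> (forall x, m < x <= e -> ll (g m) (g x)) ->
  timelike_connected X d ll U (g m) (g b).
Proof.
  intros Ham Hme Heb Hstart. destruct g_causal as [_ [_ [_ Hmono]]].
  apply (relation_propagates X _ ll le g m b e); try lra.
  - exact connected_trans.
  - exact ll_le_trans.
  - intros t1 t2 H1 H12 H2. apply Hmono; unfold in_cint; lra.
  - intros t Ht.
    destruct (curve_covered_locally t) as [delta [O [Hdelta [HO [Hopen Hloc]]]]];
      [unfold in_cint; lra|].
    exists delta, O. split; [exact Hdelta|]. split; [|split; [exact Hloc|]].
    + intros s Hs Hst. apply HO; [unfold in_cint; lra | exact Hst].
    + intros p q Hpq Oq.
      exact (timelike_connected_extend_future X d ll ll_irrefl U O p q Hopen Oq Hpq).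
  - exact Hstart.
Qed.

Lemma timelike_connected_from_start c m :
  a <= c -> c < m -> m <= b -> (forall x, c <= x < m -> ll (g x) (g m)) ->
  timelike_connected X d ll U (g a) (g m).
Proof.
  intros Hac Hcm Hmb Hstart. destruct g_causal as [_ [_ [_ Hmono]]].
  rewrite <- (Ropp_involutive a), <- (Ropp_involutive m).
  apply (relation_propagates X (fun p q => timelike_connected X d ll U q p)
           (fun p q => ll q p) (fun p q => le q p) (fun t => g (- t)) (- m) (- a) (- c));
    try lra.
  - intros p q r Hpq Hqr. exact (connected_trans _ _ _ Hqr Hpq).
  - intros p q r Hpq Hqr. exact (le_ll_trans _ _ _ Hqr Hpq).
  - intros t1 t2 H1 H12 H2. apply Hmono; unfold in_cint; lra.
  - intros t Ht.
    destruct (curve_covered_locally (- t)) as [delta [O [Hdelta [HO [Hopen Hloc]]]]];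
      [unfold in_cint; lra|].
    exists delta, O. split; [exact Hdelta|]. split; [|split].
    + intros s Hs Hst. apply HO; [unfold in_cint; lra|].
      rewrite <- Rabs_Ropp. replace (- (- s - - t)) with (s - t) by ring. exact Hst.
    + intros p q Op Oq Hpq. exact (Hloc q p Oq Op Hpq).
    + intros p q Hqp Oq.
      exact (timelike_connected_extend_past X d ll ll_irrefl U O q p Hopen Oq Hqp).
  - intros x Hx. rewrite !Ropp_involutive. apply Hstart. lra.
Qed.

Lemma timelike_connected_along_curve :
  (exists c e, a <= c /\ c < e /\ e <= b /\ rectifiable_on X tau c e g) ->
  timelike_connected X d ll U (g a) (g b).
Proof.
  intros [c [e [Hac [Hce [Heb Hrect]]]]].
  set (m := (c + e) / 2).
  apply (connected_trans _ (g m)).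
  - apply (timelike_connected_from_start c m); unfold m; try lra.
    intros x Hx. apply (rectifiable_ll c e); auto; lra.
  - apply (timelike_connected_to_end m e); unfold m; try lra.
    intros x Hx. apply (rectifiable_ll c e); auto; lra.
Qed.

End AlongCurve.

End LorentzianPreLength.

Theorem corollary3p21 (X : Type) (d : X -> X -> R) (ll le : X -> X -> Prop)
    (tau : X -> X -> Rbar) :
  LPLS X d ll le tau ->
  regularly_localizable X d ll le tau ->
  forall (a b : R) (g : R -> X),
    fd_causal X d le a b g ->
    (exists c e, a <= c /\ c < e /\ e <= b /\ rectifiable_on X tau c e g) ->
    (exists a' b' s, fd_timelike X d ll a' b' s /\ s a' = g a /\ s b' = g b) /\
    (SR_localizable X d ll le tau ->
       forall U : X -> Prop,
         d_nbhd_of_set X d (fun x => exists t, in_cint a b t /\ x = g t) U ->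
         exists a' b' s, fd_timelike X d ll a' b' s /\ s a' = g a /\
           s b' = g b /\ curve_in X U a' b' s).
Proof.
  intros HL HR a b g Hg Hrect.
  pose proof (regularly_localizable_chronological X d ll le tau HL HR) as Hchr.
  split.
  - destruct (timelike_connected_along_curve X d ll le tau HL Hchr (fun _ => True) a b g)
      as [a' [b' [s [Ts [Ea [Eb _]]]]]]; auto.
    + intros t _. destruct (HR (g t)) as [O [Ot HO]]. exists O. auto.
    + exists a', b', s. auto.
  - intros HSR U [V [HV [HgV HVU]]].
    apply (timelike_connected_along_curve X d ll le tau HL Hchr U a b g); auto.
    intros t Ht. destruct (HSR (g t) U) as [O [Ot [HOU HO]]].
    + exists V. split; [exact HV|]. split; [|exact HVU].
      intros x ->. apply HgV. exists t. auto.
    + exists O. auto.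
Qed.
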